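(* Let $\ell$ and $m$ be positive integers with $2\le\ell<m$ and let $G$ be a torsion-free abelian group written multiplicatively. Then there is no sequence $\mathcal{A}=(A_1,\dots,A_m)$ of finite subsets of $G$ satisfying simultaneously: $|A_i|\ge2$ for each $i\in[1,m]$; $|\{a\in A:\mu_{\mathcal{A}}(a)\ge2\}|\le 1$; and \[ |\Pi^{\ell}(\mathcal{A})|=\sum_{a\in A}\mu_{\mathcal{A}}(a)-\ell+1, \] where $A=A_1\cup\cdots\cup A_m$.
   Context: $\chi_S$ is the indicator function of $S$; $\mu_{\mathcal{A}}(a)=\min\big(\ell,\sum_{j=1}^m\chi_{A_j}(a)\big)$ for $a\in A$. $\Pi^{\ell}(\mathcal{A})$ is the set of all products $a_{i_1}\cdots a_{i_\ell}$ with $i_1,\dots,i_\ell\in[1,m]$ pairwise distinct and $a_{i_j}\in A_{i_j}$. *)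

From HB Require Import structures.
From mathcomp Require Import all_boot all_order all_algebra.
From mathcomp Require Import finmap.
Set Implicit Arguments. Unset Strict Implicit. Unset Printing Implicit Defensive.
Import Order.TTheory GRing.Theory Num.Theory.
Local Open Scope fset_scope.
Local Open Scope ring_scope.

(* The abelian group G is written additively (zmodType); the paper's
   product a_{i_1} ... a_{i_l} is the sum a_{i_1} + ... + a_{i_l}. *)

Definition torsion_free (G : zmodType) : Prop :=
  forall (x : G) (n : nat), (0 < n)%N -> x *+ n = 0 -> x = 0.

Definition unionA (G : zmodType) (m : nat) (A : 'I_m -> {fset G}) : {fset G} :=
  \bigcup_(i <- enum 'I_m) A i.

Definition muA (G : zmodType) (l m : nat) (A : 'I_m -> {fset G}) (a : G) : nat :=
  minn l (\sum_(j < m) (a \in A j : nat))%N.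

Definition in_PiA (G : zmodType) (l m : nat) (A : 'I_m -> {fset G}) (g : G) : Prop :=
  exists (i : 'I_l -> 'I_m) (a : 'I_l -> G),
    injective i /\ (forall j, a j \in A (i j)) /\ g = \sum_(j < l) a j.

From HB Require Import structures.
From mathcomp Require Import all_boot all_order all_algebra.
From mathcomp Require Import finmap.
From Stdlib Require Import Classical.
From mathcomp Require Import zify.
Import Order.TTheory GRing.Theory Num.Theory.
Set Implicit Arguments. Unset Strict Implicit. Unset Printing Implicit Defensive.
Local Open Scope fset_scope.
Local Open Scope ring_scope.

(* Everything follows from the sharper bound
     |Pi^k(A)| >= sum_a mu_k(a) - k + 2   for 2 <= k < m,
   valid whenever every A_i has at least two elements and at most one element
   is repeated.  Only finitely many sums are ever compared, and in a
   torsion-free group any finite set of elements can be signed consistently by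
   enlarging a pure cone one element at a time; this yields a
   translation-invariant order that is total on all the sumsets involved.
   The bound is proved by induction on k, the order of the A_i being
   irrelevant.  For the step, put first a set B containing the repeated
   element, let M = max B and t = min Pi^k of the other sets: (B \ {M}) + t and
   M + Pi^k(others) are disjoint subsets of Pi^(k+1)(A).  For k = 2, take B
   containing the maximum M of the union, t the minimum of the union of the
   other sets, and D one of these sets not needed to contain t; then
   ((B \ {M}) u (D \ B)) + t is still disjoint from M + Pi^1(others), and D
   contributes the extra unit. *)

Definition total_on (T : eqType) (r : T -> T -> Prop) (X : seq T) :=
  {in X &, forall a b, [\/ a = b, r a b | r b a]}.

Lemma chain_max (T : eqType) (r : T -> T -> Prop) (X : seq T) :
  (forall x y z, r x y -> r y z -> r x z) -> total_on r X -> X != [::] ->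
  exists2 M, M \in X & {in X, forall y, y = M \/ r y M}.
Proof.
move=> r_trans; elim: X => [//|a s IH] rtot _.
have [->|s_neq0] := eqVneq s [::].
  by exists a; rewrite ?mem_head // => y; rewrite inE => /eqP ->; left.
have sub_s : {subset s <= a :: s} by move=> z zs; rewrite inE zs orbT.
have [M Ms HM] := IH (sub_in2 sub_s rtot) s_neq0.
have [aM|aM|Ma] := rtot a M (mem_head _ _) (sub_s _ Ms).
- by exists M; [exact: sub_s | move=> y; rewrite inE => /predU1P [->|/HM]; [left|]].
- by exists M; [exact: sub_s | move=> y; rewrite inE => /predU1P [->|/HM]; [right|]].
- exists a; first exact: mem_head.
  move=> y; rewrite inE => /predU1P [->|/HM [->|yM]]; [left|right|right] => //.
  exact: r_trans yM Ma.
Qed.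

Lemma chain_min (T : eqType) (r : T -> T -> Prop) (X : seq T) :
  (forall x y z, r x y -> r y z -> r x z) -> total_on r X -> X != [::] ->
  exists2 t, t \in X & {in X, forall y, y = t \/ r t y}.
Proof.
move=> r_trans rtot; apply: (@chain_max _ (fun a b => r b a)).
  by move=> x y z ryx rzy; apply: r_trans rzy ryx.
by move=> a b aX bX; case: (rtot a b aX bX) => ?; [apply: Or31|apply: Or33|apply: Or32].
Qed.

Section TranslationOrder.
Variable G : zmodType.
Hypothesis tfG : torsion_free G.

Definition pure_cone (P : G -> Prop) :=
  [/\ ~ P 0, forall x y, P x -> P y -> P (x + y)
    & forall x n, (0 < n)%N -> P (x *+ n) -> P x].

Lemma pure_cone_mulrn P x n : pure_cone P -> P x -> (0 < n)%N -> P (x *+ n).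
Proof.
case=> _ PD _ Px; elim: n => [//|[|n] IH] _; first by rewrite mulr1n.
by rewrite mulrS; apply: PD => //; apply: IH.
Qed.

(* The pure cone generated by [P] and [d]. *)
Definition cone_adjoin (P : G -> Prop) (d y : G) := exists k n, (0 < k)%N /\
  (P (y *+ k - d *+ n) \/ (y *+ k - d *+ n = 0 /\ (0 < n)%N)).

Section Adjoin.
Variables (P : G -> Prop) (d : G).
Hypotheses (coneP : pure_cone P) (d_neq0 : d <> 0) (Pd : ~ P d) (PNd : ~ P (- d)).

Lemma cone_adjoin_pure : pure_cone (cone_adjoin P d).
Proof.
have [P0 PD Proot] := coneP.
split.
- move=> [k [n [_]]]; rewrite mul0rn sub0r -mulNrn => -[|[dn0 n_gt0]].
    by case: n => [|n]; [rewrite mulr0n | move/(Proot _ n.+1 isT)].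
  by apply: d_neq0; apply: (tfG n_gt0); apply/eqP; rewrite -oppr_eq0 -mulNrn dn0.
- move=> x y [k1 [n1 [k1_gt0 Px]]] [k2 [n2 [k2_gt0 Py]]].
  exists (k1 * k2)%N, (n1 * k2 + n2 * k1)%N; split; first by rewrite muln_gt0 k1_gt0.
  have -> : (x + y) *+ (k1 * k2) - d *+ (n1 * k2 + n2 * k1) =
            (x *+ k1 - d *+ n1) *+ k2 + (y *+ k2 - d *+ n2) *+ k1.
    by rewrite mulrnDl mulrnDr !mulrnBl -!mulrnA [(k2 * k1)%N]mulnC opprD addrACA.
  case: Px => [Px|[-> n1_gt0]]; case: Py => [Py|[-> n2_gt0]]; rewrite ?mul0rn ?addr0 ?add0r.
  + by left; apply: PD; apply: pure_cone_mulrn.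
  + by left; apply: pure_cone_mulrn.
  + by left; apply: pure_cone_mulrn.
  + by right; split; rewrite ?addn_gt0 ?muln_gt0 ?n1_gt0 ?k2_gt0.
- move=> x n n_gt0 [k [k' [k_gt0 Px]]].
  by exists (n * k)%N, k'; split; [rewrite muln_gt0 n_gt0 | rewrite mulrnA].
Qed.

Lemma cone_adjoin_sub y : P y -> cone_adjoin P d y.
Proof. by move=> Py; exists 1%N, 0%N; rewrite mulr1n mulr0n subr0; split; [|left]. Qed.

Lemma cone_adjoin_d : cone_adjoin P d d.
Proof. by exists 1%N, 1%N; rewrite mulr1n subrr; split; [|right]. Qed.

End Adjoin.

Lemma pure_cone_decide (L : seq G) : exists P, pure_cone P /\
  {in L, forall d, [\/ d = 0, P d | P (- d)]}.
Proof.
elim: L => [|d L [P [coneP PL]]].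
  by exists (fun _ => False); split => //; split.
have [dL|] := classic ([\/ d = 0, P d | P (- d)]).
  by exists P; split => // e; rewrite inE => /predU1P [->|/PL].
move=> ndP; have d_neq0 : d <> 0 by move=> ?; apply: ndP; apply: Or31.
have Pd : ~ P d by move=> ?; apply: ndP; apply: Or32.
have PNd : ~ P (- d) by move=> ?; apply: ndP; apply: Or33.
exists (cone_adjoin P d); split; first exact: cone_adjoin_pure.
move=> e; rewrite inE => /predU1P [->|/PL []]; first by apply: Or32; exact: cone_adjoin_d.
- by apply: Or31.
- by move/(cone_adjoin_sub d); apply: Or32.
- by move/(cone_adjoin_sub d); apply: Or33.
Qed.

Lemma exists_translation_order (X : seq G) : exists lt : G -> G -> Prop,
  [/\ forall x, ~ lt x x, forall x y z, lt x y -> lt y z -> lt x z,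
      forall x y z, lt x y -> lt (x + z) (y + z) & total_on lt X].
Proof.
have [P [[P0 PD _] PX]] := pure_cone_decide [seq b - a | a <- X, b <- X].
exists (fun x y => P (y - x)); split.
- by move=> x; rewrite subrr.
- by move=> x y z Pyx Pzy; have := PD _ _ Pzy Pyx; rewrite addrA subrK.
- by move=> x y z; rewrite opprD addrACA subrr addr0.
move=> a b aX bX; have /PX [/eqP|Pba|Pab] : b - a \in [seq b - a | a <- X, b <- X].
- by apply/allpairsP; exists (a, b).
- by rewrite subr_eq0 => /eqP ->; apply: Or31.
- exact: Or32.
- by apply: Or33; rewrite opprB in Pab.
Qed.

End TranslationOrder.

Lemma card_fsub_sum (K : choiceType) (V X : {fset K}) : X `<=` V ->
  #|` X| = (\sum_(a <- V) (a \in X : nat))%N.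
Proof.
move=> XV; rewrite card_fset_sum1 -(big_fset_incl _ (F := fun a => (a \in X : nat)) XV).
  by rewrite !big_seq; apply: eq_bigr => a ->.
by move=> a _ /negbTE ->.
Qed.

Section RestrictedSumsets.
Variable G : zmodType.
Implicit Types (B C D X Y : {fset G}) (As R : seq {fset G}).

Definition sumfs B X : {fset G} := [fset b + x | b in B, x in X].

Lemma sumfs_subset B B' X X' : B `<=` B' -> X `<=` X' -> sumfs B X `<=` sumfs B' X'.
Proof.
move=> /fsubsetP BB' /fsubsetP XX'; apply/fsubsetP => _ /imfset2P [b bB [x xX ->]].
by apply: in_imfset2; [apply: BB' | apply: XX'].
Qed.

Lemma sumfs0 B : sumfs B [fset 0] = B.
Proof.
apply/fsetP => g; apply/imfset2P/idP => [[b bB [x]]|gB].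
  by rewrite inE => /eqP -> ->; rewrite addr0.
by exists g => //; exists 0; rewrite ?inE ?addr0.
Qed.

Lemma sumfsUr B X Y : sumfs B (X `|` Y) = sumfs B X `|` sumfs B Y.
Proof.
apply/eqP; rewrite eqEfsubset fsubUset !sumfs_subset ?fsubsetUl ?fsubsetUr // !andbT.
apply/fsubsetP => g /imfset2P [b bB [x]]; case/fsetUP=> [xX|xY] ->.
  by apply/fsetUP; left; apply: in_imfset2.
by apply/fsetUP; right; apply: in_imfset2.
Qed.

Lemma sumfsCA B C X : sumfs B (sumfs C X) = sumfs C (sumfs B X).
Proof.
suff sub B' C' : sumfs B' (sumfs C' X) `<=` sumfs C' (sumfs B' X).
  by apply/eqP; rewrite eqEfsubset !sub.
apply/fsubsetP => g /imfset2P [b bB [_ /imfset2P [c cC [x xX ->]] ->]].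
by rewrite addrCA; apply: in_imfset2 => //; apply: in_imfset2.
Qed.

(* [Pi As k] is the paper's Pi^k: the sums of k elements taken from k distinct
   members of [As]. *)
Fixpoint Pi As k {struct As} : {fset G} :=
  match k, As with
  | 0, _ => [fset 0]
  | _.+1, [::] => fset0
  | k'.+1, B :: R => sumfs B (Pi R k') `|` Pi R k
  end.

Lemma Pi0 As : Pi As 0 = [fset 0].
Proof. by case: As. Qed.

Lemma Pi_swap B C R k : Pi [:: B, C & R] k = Pi [:: C, B & R] k.
Proof.
case: k => [|[|k]] //=; first by rewrite !Pi0 fsetUCA.
by rewrite !sumfsUr sumfsCA fsetUACA.
Qed.

Lemma Pi_cons_congr B R R' : Pi R =1 Pi R' -> Pi (B :: R) =1 Pi (B :: R').
Proof. by move=> eqR [|k] //=; rewrite !eqR. Qed.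

Lemma Pi_move_front As1 B As2 : Pi (As1 ++ B :: As2) =1 Pi (B :: As1 ++ As2).
Proof.
elim: As1 => [//|C As1 IH] k.
by rewrite -Pi_swap; apply: Pi_cons_congr.
Qed.

Lemma perm_Pi As As' : perm_eq As As' -> Pi As =1 Pi As'.
Proof.
elim: As As' => [|B As IH] As' pAs.
  by move: pAs; rewrite perm_sym => /perm_nilP ->.
have BAs' : B \in As' by rewrite -(perm_mem pAs) mem_head.
move: pAs; case/splitPr: BAs' => As1 As2.
rewrite perm_sym -[B :: As2]cat1s perm_catCA perm_cons perm_sym => pAs k.
by rewrite Pi_move_front; apply: Pi_cons_congr; apply: IH.
Qed.

Lemma Pi_cons_sub B R k : Pi R k `<=` Pi (B :: R) k.
Proof. by case: k => [|k] /=; rewrite ?Pi0 ?fsubsetUr. Qed.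

Lemma mem_Pi_cons B R k b s : b \in B -> s \in Pi R k -> b + s \in Pi (B :: R) k.+1.
Proof. by move=> bB sPi; apply/fsetUP; left; apply: in_imfset2. Qed.

Lemma Pi_neq0 As k : (k <= size As)%N -> {in As, forall B, (0 < #|` B|)%N} ->
  Pi As k != fset0.
Proof.
elim: As k => [|B As IH] [|k] //= k_le nonempty; try by apply/fset0Pn; exists 0; rewrite inE.
have /fset0Pn [b bB] : B != fset0 by rewrite -cardfs_gt0 nonempty ?mem_head.
have /fset0Pn [s sPi] := IH k k_le (sub_in1 (@mem_behead _ (B :: As)) nonempty).
by apply/fset0Pn; exists (b + s); apply: mem_Pi_cons.
Qed.

Definition union As : {fset G} := \bigcup_(B <- As) B.

Definition multiplicity (a : G) As := count (fun B => a \in B) As.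

Definition repeated As := [fset a in union As | (1 < multiplicity a As)%N].

Lemma union_cons B R : union (B :: R) = B `|` union R.
Proof. by rewrite /union big_cons. Qed.

Lemma union_sub B As : B \in As -> B `<=` union As.
Proof. by move=> BAs; apply: bigfcup_sup. Qed.

Lemma union_multiplicity a As : (a \in union As) = (0 < multiplicity a As)%N.
Proof.
elim: As => [|B As IH]; first by rewrite /union big_nil.
by rewrite union_cons in_fsetU IH /=; case: (a \in B).
Qed.

Lemma Pi1 As : Pi As 1 = union As.
Proof.
elim: As => [|B As IH] /=; first by rewrite /union big_nil.
by rewrite Pi0 sumfs0 IH union_cons.
Qed.

Lemma perm_union As As' : perm_eq As As' -> union As = union As'.
Proof. exact: perm_big. Qed.

Lemma perm_multiplicity a As As' :
  perm_eq As As' -> multiplicity a As = multiplicity a As'.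
Proof. by move/permP/(_ (fun B => a \in B)). Qed.

Lemma perm_repeated As As' : perm_eq As As' -> repeated As = repeated As'.
Proof.
by move=> pAs; apply/fsetP => a; rewrite !inE (perm_union pAs) (perm_multiplicity a pAs).
Qed.

Lemma repeated_cons_sub B R : repeated R `<=` repeated (B :: R).
Proof.
apply/fsubsetP => a; rewrite !inE union_cons in_fsetU /= => /andP [-> /= a_rep].
by rewrite orbT (leq_trans a_rep) ?leq_addl.
Qed.

Lemma sum_minn1_multiplicity As :
  (\sum_(a <- union As) minn 1 (multiplicity a As))%N = #|` union As|.
Proof.
rewrite card_fset_sum1 big_seq [RHS]big_seq; apply: eq_bigr => a.
by rewrite union_multiplicity => /minn_idPl.
Qed.

Lemma fsetI_sub_repeated B D R : D \in R -> D `&` B `<=` repeated (B :: R).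
Proof.
move=> DR; apply/fsubsetP => a; rewrite !inE => /andP [aD aB] /=.
have aR : (0 < multiplicity a R)%N by rewrite -union_multiplicity (fsubsetP (union_sub DR)).
by rewrite union_cons in_fsetU aB add1n ltnS.
Qed.

Lemma repeated_sub_member As : As != [::] -> (#|` repeated As| <= 1)%N ->
  exists2 B, B \in As & repeated As `<=` B.
Proof.
move=> As_neq0 rep_le1; have [->|[x x_rep]] := fset_0Vmem (repeated As).
  by case: As As_neq0 {rep_le1} => [//|B As] _; exists B; rewrite ?mem_head ?fsub0set.
have /eqP rep_x : [fset x] == repeated As by rewrite eqEfcard fsub1set x_rep cardfs1.
rewrite /repeated !inE /= union_multiplicity -has_count in x_rep.
case/andP: x_rep => /hasP [B BAs xB] _.
by exists B; rewrite // -rep_x fsub1set.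
Qed.

Lemma union_perm_cons a R : (1 < size R)%N -> a \in union R ->
  exists D R', perm_eq R (D :: R') /\ a \in union R'.
Proof.
case: R => [|C0 [|C1 R]] //= _; rewrite !union_cons !in_fsetU.
have [aC0 _|aC0 /= aR] := boolP (a \in C0).
  by exists C1, (C0 :: R); rewrite union_cons in_fsetU aC0 (perm_catCA [:: C0] [:: C1]).
by exists C0, (C1 :: R); rewrite union_cons in_fsetU.
Qed.

Lemma sum_minn_multiplicity_cons B R k : (0 < k)%N ->
  (\sum_(a <- union (B :: R)) minn k.+1 (multiplicity a (B :: R)) <=
   #|` B| + \sum_(a <- union R) minn k (multiplicity a R)
   + #|` repeated (B :: R) `\` B|)%N.
Proof.
move=> k_gt0; set V := union (B :: R).
have BV : B `<=` V by rewrite /V union_cons fsubsetUl.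
have RV : union R `<=` V by rewrite /V union_cons fsubsetUr.
have repV : repeated (B :: R) `\` B `<=` V.
  by apply/fsubsetP => a; rewrite !inE => /and3P [].
rewrite (card_fsub_sum BV) (card_fsub_sum repV) (big_fset_incl _ RV); last first.
  by move=> a _; rewrite union_multiplicity lt0n negbK => /eqP ->; rewrite minn0.
rewrite -!big_split /= big_seq [X in (_ <= X)%N]big_seq; apply: leq_sum => a aV.
rewrite !inE aV /=; case: (a \in B) => /=; lia.
Qed.

End RestrictedSumsets.

Section LowerBound.
Variables (G : zmodType) (lt : G -> G -> Prop).
Hypotheses (lt_irr : forall x, ~ lt x x)
  (lt_trans : forall x y z, lt x y -> lt y z -> lt x z)
  (lt_add : forall x y z, lt x y -> lt (x + z) (y + z)).
Implicit Types (B D X Y Z : {fset G}) (As R : seq {fset G}).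

Lemma card_translates_le (M t : G) Z Y X :
  {in Y, forall y, y = t \/ lt t y} -> {in Z, forall z, lt z M /\ z + t \in X} ->
  {in Y, forall y, M + y \in X} -> (#|` Z| + #|` Y| <= #|` X|)%N.
Proof.
move=> t_min Z_lt_X MY_X.
have card_Zt : #|` [fset z + t | z in Z]| = #|` Z|.
  by rewrite card_in_imfset //= => x y _ _ /addIr.
have card_MY : #|` [fset M + y | y in Y]| = #|` Y|.
  by rewrite card_in_imfset //= => x y _ _ /addrI.
rewrite -card_Zt -card_MY -cardfsUI.
have -> : [fset z + t | z in Z] `&` [fset M + y | y in Y] = fset0.
  apply/fsetP => g; rewrite !inE; apply/negP => /andP [].
  move=> /imfsetP [z /= zZ ->] /imfsetP [y /= yY].
  have zt_lt_Mt : lt (z + t) (M + t) := lt_add t (Z_lt_X z zZ).1.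
  have zt_lt_My : lt (z + t) (M + y).
    case: (t_min y yY) => [-> //|/(lt_add M)].
    by rewrite (addrC t) (addrC y); apply: lt_trans.
  by move=> eq_zt_My; rewrite eq_zt_My in zt_lt_My; apply: lt_irr zt_lt_My.
rewrite cardfs0 addn0 fsubset_leq_card // fsubUset.
apply/andP; split; apply/fsubsetP => _ /imfsetP [x /= xS ->].
  by case: (Z_lt_X x xS).
exact: MY_X.
Qed.

Definition Pi_card_bound k As :=
  (k < size As)%N -> {in As, forall B, 1 < #|` B|}%N -> (#|` repeated As| <= 1)%N ->
  (forall j, (j <= k)%N -> total_on lt (Pi As j)) ->
  (\sum_(a <- union As) minn k (multiplicity a As) + 2 <= #|` Pi As k| + k)%N.

Lemma perm_Pi_card_bound k As As' :
  perm_eq As As' -> Pi_card_bound k As' -> Pi_card_bound k As.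
Proof.
move=> pAs bound; rewrite /Pi_card_bound (perm_size pAs) (perm_repeated pAs) (perm_union pAs).
under eq_bigr do rewrite (perm_multiplicity _ pAs).
move=> size_As large rep tot; rewrite (perm_Pi pAs); apply: bound => // [B|j jk].
  by rewrite -(perm_mem pAs); apply: large.
by rewrite -(perm_Pi pAs); apply: tot.
Qed.

Lemma Pi_card_bound_consS k B R : (1 < k)%N -> (forall As, Pi_card_bound k As) ->
  repeated (B :: R) `<=` B -> Pi_card_bound k.+1 (B :: R).
Proof.
move=> k_gt1 IH repB size_R large rep tot; have {}size_R : (k < size R)%N := size_R.
have large_R : {in R, forall C, 1 < #|` C|}%N.
  by move=> C CR; apply: large; rewrite inE CR orbT.
have tot_R j : (j <= k)%N -> total_on lt (Pi R j).
  by move=> jk; apply: sub_in2 (tot j (leqW jk)); apply/fsubsetP/Pi_cons_sub.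
have rep_R : (#|` repeated R| <= 1)%N.
  exact: leq_trans (fsubset_leq_card (repeated_cons_sub B R)) rep.
have bound_R := IH R size_R large_R rep_R tot_R.
have tot_B : total_on lt B.
  by apply: sub_in2 (tot 1%N isT); apply/fsubsetP; rewrite Pi1 union_cons fsubsetUl.
have B_neq0 : B != fset0 by rewrite -cardfs_gt0 ltnW ?large ?mem_head.
have [M MB M_max] := chain_max lt_trans tot_B B_neq0.
have Pi_R_neq0 : Pi R k != fset0.
  by apply: Pi_neq0 (ltnW size_R) _ => C /large_R /ltnW.
have [t tPi t_min] := chain_min lt_trans (tot_R k (leqnn k)) Pi_R_neq0.
have card_Pi : (#|` B `\ M| + #|` Pi R k| <= #|` Pi (B :: R) k.+1|)%N.
  apply: (card_translates_le (M := M) t_min) => [z|y yPi]; last exact: mem_Pi_cons.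
  rewrite in_fsetD1 => /andP [zM zB]; split; last exact: mem_Pi_cons.
  by case: (M_max z zB) => [eqzM|//]; rewrite eqzM eqxx in zM.
have := sum_minn_multiplicity_cons B R (ltnW k_gt1).
have -> : repeated (B :: R) `\` B = fset0 by apply/eqP; rewrite fsetD_eq0.
have := cardfsD1 M B; rewrite MB cardfs0 add1n addn0.
lia.
Qed.

Lemma Pi_card_bound2_cons B R M : M \in B ->
  {in union (B :: R), forall y, y = M \/ lt y M} -> Pi_card_bound 2 (B :: R).
Proof.
move=> MB M_max size_R large rep tot; have {}size_R : (1 < size R)%N := size_R.
have large_R : {in R, forall C, 1 < #|` C|}%N.
  by move=> C CR; apply: large; rewrite inE CR orbT.
have tot_R : total_on lt (Pi R 1).
  by apply: sub_in2 (tot 1%N isT); apply/fsubsetP/Pi_cons_sub.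
have Pi_R_neq0 : Pi R 1 != fset0.
  by apply: Pi_neq0 (ltnW size_R) _ => C /large_R /ltnW.
have [t tR t_min] := chain_min lt_trans tot_R Pi_R_neq0.
have [D [R' [pR tR']]] : exists D R', perm_eq R (D :: R') /\ t \in union R'.
  by apply: union_perm_cons size_R _; rewrite -Pi1.
have DR : D \in R by rewrite (perm_mem pR) mem_head.
have lt_M z : z \in union (B :: R) -> z != M -> lt z M.
  by move=> zU zM; case: (M_max z zU) => [eqzM|//]; rewrite eqzM eqxx in zM.
have card_Pi : (#|` (B `\ M) `|` (D `\` B)| + #|` Pi R 1| <= #|` Pi (B :: R) 2|)%N.
  apply: (card_translates_le (M := M) t_min) => [z|y yPi]; last exact: mem_Pi_cons.
  rewrite in_fsetU in_fsetD1 in_fsetD => /orP [/andP [zM zB]|/andP [zB zD]].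
    by split; [apply: lt_M zM; rewrite union_cons in_fsetU zB | exact: mem_Pi_cons].
  split.
    apply: lt_M; first by rewrite union_cons in_fsetU (fsubsetP (union_sub DR)) ?orbT.
    by apply: contraNneq zB => ->.
  apply: (fsubsetP (Pi_cons_sub B R 2)); rewrite (perm_Pi pR).
  by apply: mem_Pi_cons; rewrite ?Pi1.
have card_Z : (#|` B| + #|` repeated (B :: R) `\` B| <= #|` (B `\ M) `|` (D `\` B)|)%N.
  have DB_rep : (#|` D `&` B| + #|` repeated (B :: R) `\` B| <= 1)%N.
    rewrite -(cardfsID B (repeated (B :: R))) in rep; apply: leq_trans rep.
    by rewrite leq_add2r fsubset_leq_card // fsubsetI fsetI_sub_repeated // fsubsetIr.
  have := cardfsUI (B `\ M) (D `\` B).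
  have -> : (B `\ M) `&` (D `\` B) = fset0.
    by apply/fsetP => z; rewrite !inE; case: (z \in B); rewrite ?andbF.
  have := cardfsD1 M B; have := cardfsID B D; have := large_R D DR.
  rewrite MB cardfs0; lia.
have := sum_minn_multiplicity_cons B R (isT : 0 < 1)%N.
rewrite sum_minn1_multiplicity -(Pi1 R); lia.
Qed.

Lemma Pi_card_bound_gt1 k As : (1 < k)%N -> Pi_card_bound k As.
Proof.
elim: k As => [//|[//|[|k]] IH] As _ size_As large rep tot.
  have tot1 := tot 1%N isT; rewrite Pi1 in tot1.
  have U_neq0 : union As != fset0.
    by rewrite -Pi1; apply: Pi_neq0 (ltnW (ltnW size_As)) _ => C /large /ltnW.
  have [M MU M_max] := chain_max lt_trans tot1 U_neq0.
  have [B BAs MB] : exists2 B, B \in As & M \in B.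
    by apply/hasP; rewrite has_count -union_multiplicity.
  have pAs := perm_to_rem BAs.
  apply: (perm_Pi_card_bound pAs) size_As large rep tot.
  by apply: (Pi_card_bound2_cons MB); rewrite -(perm_union pAs).
have As_neq0 : As != [::] by case: (As) size_As.
have [B BAs repB] := repeated_sub_member As_neq0 rep.
have pAs := perm_to_rem BAs.
apply: (perm_Pi_card_bound pAs) size_As large rep tot.
apply: Pi_card_bound_consS => //; first by move=> As'; apply: IH.
by rewrite -(perm_repeated pAs).
Qed.

End LowerBound.

Section IndexedFamilies.
Variables (G : zmodType) (m : nat) (A : 'I_m -> {fset G}).

Lemma Pi_map_witness (s : seq 'I_m) k g : uniq s -> g \in Pi [seq A i | i <- s] k ->
  exists w : seq ('I_m * G), [/\ size w = k, uniq (unzip1 w), {subset unzip1 w <= s},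
    all (fun p => p.2 \in A p.1) w & g = \sum_(p <- w) p.2].
Proof.
elim: s k g => [|i s IH] [|k] g //=; rewrite ?inE.
- by move=> _ /eqP ->; exists [::]; rewrite big_nil.
- by move=> _ /eqP ->; exists [::]; rewrite big_nil.
case/andP => i_notin_s uniq_s /orP [/imfset2P [b bAi [x xPi ->]]|gPi].
  have [w [size_w uniq_w w_s wA ->]] := IH k x uniq_s xPi.
  exists ((i, b) :: w); rewrite /= size_w uniq_w bAi wA big_cons; split => //.
    by rewrite andbT; apply: contra i_notin_s => /w_s.
  by move=> j; rewrite !inE => /predU1P [->|/w_s ->]; rewrite ?eqxx ?orbT.
have [w [size_w uniq_w w_s wA ->]] := IH k.+1 g uniq_s gPi.
by exists w; split => // j /w_s; rewrite inE orbC => ->.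
Qed.

Lemma in_PiA_Pi l g : g \in Pi [seq A i | i <- enum 'I_m] l -> in_PiA l A g.
Proof.
move=> /(Pi_map_witness (enum_uniq 'I_m)) [w [/eqP size_w uniq_w _ wA ->]].
pose t := Tuple size_w; have -> : w = t by [].
exists (fun j => (tnth t j).1), (fun j => (tnth t j).2); split; [|split].
- by move=> j1 j2; rewrite -!(tnth_map fst); apply/tuple_uniqP.
- by move=> j; have /all_tnthP := wA : all _ t; apply.
by rewrite big_tuple.
Qed.

End IndexedFamilies.

Theorem theorem1p17 (G : zmodType) (l m : nat) :
  (2 <= l)%N -> (l < m)%N -> torsion_free G ->
  ~ exists A : 'I_m -> {fset G},
      (forall i, (2 <= #|` A i|)%N) /\
      (#|` [fset a in unionA A | (2 <= muA l A a)%N]| <= 1)%N /\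
      (exists P : {fset G},
          (forall g, g \in P <-> in_PiA l A g) /\
          (#|` P|%:Z = (\sum_(a <- unionA A) muA l A a)%N%:Z - l%:Z + 1)).
Proof.
move=> l_gt1 l_lt_m tfG [A [large [rep [P [PE cardP]]]]].
pose As := [seq A i | i <- enum 'I_m].
have union_As : union As = unionA A by rewrite /union big_map.
have mu_As a : minn l (multiplicity a As) = muA l A a.
  by rewrite /muA /multiplicity count_map -sum1_count big_mkcond big_enum.
have [lt [lt_irr lt_trans lt_add tot]] :=
  exists_translation_order tfG (flatten [seq Pi As j : seq G | j <- iota 0 l.+1]).
have size_As : (l < size As)%N by rewrite size_map size_enum_ord.
have large_As : {in As, forall B, 1 < #|` B|}%N by move=> _ /mapP [i _ ->].
have bound := Pi_card_bound_gt1 lt_irr lt_trans lt_add (As := As) l_gt1 size_As large_As.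
have {}bound : (\sum_(a <- unionA A) muA l A a + 2 <= #|` Pi As l| + l)%N.
  rewrite -union_As; under eq_bigr do rewrite -mu_As; apply: bound.
    apply: leq_trans rep; apply/fsubset_leq_card/fsubsetP => a.
    by rewrite !inE /= union_As -mu_As leq_min l_gt1 => /andP [-> ->].
  move=> j jl; apply: sub_in2 tot => x xPi; apply/flattenP; exists (Pi As j : seq G) => //.
  by apply/mapP; exists j; rewrite // mem_iota ltnS.
have PiP : (#|` Pi As l| <= #|` P|)%N.
  by apply/fsubset_leq_card/fsubsetP => g /in_PiA_Pi /PE.
lia.
Qed.
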